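(* Let $n$ and $s$ be positive integers. Let $f$ be a nonzero $n$-variable Boolean function with $\deg(f)\ge s-1$, and let $D\subseteq\mathbb{F}_2^n$ be its support. Then ${FAI}(f)\ge s$ if and only if $$\mathrm{RM}(e,n)^{\overline{D}}\cap\left(\mathrm{RM}(e+n-s,n)^{\overline{D}}\right)^{\perp}=\{\mathbf 0\}$$ holds for every integer $e$ with $1\le e\le n$.
   Context: An $n$-variable Boolean function is a map $\mathbb{F}_2^n\to\mathbb{F}_2$; its algebraic degree $\deg$ is the degree of its algebraic normal form (its unique representation as a multilinear polynomial over $\mathbb{F}_2$). The support of $f$ is $\{x: f(x)=1\}$ and $wt(f)$ is its size. ${AN}^c(f)$ denotes the set of $n$-variable Boolean functions $g$ with $f\cdot g\neq 0$ (pointwise product). The fast algebraic immunity ${FAI}(f)$ is the minimum of $\deg(g)+\deg(f\cdot g)$ over all $g\in{AN}^c(f)$ with $g\neq 1$. For an integer $r$, the Reed–Muller code $\mathrm{RM}(r,n)\subseteq\mathbb{F}_2^{\mathbb{F}_2^n}$ is the set of value vectors $(h(x))_{x\in\mathbb{F}_2^n}$ of $n$-variable Boolean functions $h$ with $\deg(h)\le r$ (so for $r\ge n$ it is the whole space). For a code $\mathcal C$ with coordinates indexed by a set $X$ and a subset $E\subseteq X$, the punctured code $\mathcal C^{E}$ is obtained by deleting the coordinates in $E$ from every codeword; $\overline{D}=\mathbb{F}_2^n\setminus D$, so $\mathrm{RM}(r,n)^{\overline D}=\{(h(x))_{x\in D}:\deg h\le r\}\subseteq\mathbb{F}_2^{D}$.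 The dual $\mathcal C^\perp$ is with respect to the standard (Euclidean) inner product on $\mathbb{F}_2^{D}$. *)

From mathcomp Require Import all_boot all_algebra.
Set Implicit Arguments. Unset Strict Implicit. Unset Printing Implicit Defensive.
Import GRing.Theory.
Local Open Scope ring_scope.

Definition pt (n : nat) := 'rV['F_2]_n.
Definition BF (n : nat) := {ffun pt n -> 'F_2}.

Definition bf0 (n : nat) : BF n := [ffun _ => 0].
Definition bf1 (n : nat) : BF n := [ffun _ => 1].

Definition bfmul (n : nat) (f g : BF n) : BF n := [ffun x => f x * g x].

(* Evaluation of a multilinear polynomial over F_2 given by its set S of
   monomials (a monomial is the set of variables it contains). *)
Definition anf_eval (n : nat) (S : {set {set 'I_n}}) : BF n :=
  [ffun x : pt n => \sum_(u in S) \prod_(i in u) x ord0 i].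

(* Since the ANF is
   unique, the outer max ranges over exactly one S.  deg 0 = 0 here; the
   convention deg 0 = -oo is handled explicitly in RM below. *)
Definition deg (n : nat) (f : BF n) : nat :=
  \max_(S : {set {set 'I_n}} | anf_eval S == f) \max_(u in S) #|u|.

Definition supp (n : nat) (f : BF n) : {set pt n} := [set x | f x != 0].

(* Fast algebraic immunity: min of deg g + deg (f g) over g with f g <> 0,
   g <> 1.  (The default value 2n for an empty range is never used when
   f <> 0 and n > 0, since deg g + deg (f g) <= 2n anyway.) *)
Definition FAI (n : nat) (f : BF n) : nat :=
  \big[minn/(2 * n)%N]_(g : BF n | (bfmul f g != bf0 n) && (g != bf1 n))
     (deg g + deg (bfmul f g))%N.

Definition word (n : nat) (D : {set pt n}) := {ffun {x : pt n | x \in D} -> 'F_2}.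

Definition word0 (n : nat) (D : {set pt n}) : word D := [ffun _ => 0].

Definition puncture (n : nat) (D : {set pt n}) (h : BF n) : word D :=
  [ffun x => h (val x)].

(* Reed-Muller code RM(r,n), r an integer; deg 0 = -oo so RM(r,n) = {0}
   for r < 0. *)
Definition RM (n : nat) (r : int) : {set BF n} :=
  [set h : BF n | (h == bf0 n) || ((deg h)%:Z <= r)].

(* Punctured code RM(r,n)^{complement of D} *)
Definition RMp (n : nat) (r : int) (D : {set pt n}) : {set word D} :=
  [set puncture D h | h in RM n r].

Definition dotw (n : nat) (D : {set pt n}) (c d : word D) : 'F_2 :=
  \sum_(x : {x : pt n | x \in D}) c x * d x.

Definition dual (n : nat) (D : {set pt n}) (C : {set word D}) : {set word D} :=
  [set c : word D | [forall d in C, dotw c d == 0]].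

From mathcomp Require Import all_boot all_order all_algebra zify.
Set Implicit Arguments. Unset Strict Implicit. Unset Printing Implicit Defensive.
Import Order.TTheory GRing.Theory.
Local Open Scope ring_scope.

(* Everything rests on the duality RM(r,n)^perp = RM(n-1-r,n): a Boolean
   function of degree < n sums to 0 over F_2^n, whereas a monomial x^u of
   maximal degree in the ANF of F pairs to 1 with the complementary monomial
   x^(~u).  Since <g|_D, h|_D> = sum_x f(x) g(x) h(x), the word g|_D lies in
   the dual of RM(r,n)^(~D) iff fg = 0 or deg(fg) + r < n.  With
   r = e + n - s, triviality of the intersection at e thus says
   deg g + deg(fg) >= s whenever deg g <= e and fg <> 0; taking e = deg g
   gives the FAI bound, and g = 1 is covered by deg f >= s - 1. *)

Lemma F2_cases (a : 'F_2) : a = 0 \/ a = 1.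
Proof. by case: a => -[|[|//]] ?; [left | right]; apply: val_inj. Qed.

Lemma sum_F2 (V : nmodType) (F : 'F_2 -> V) : \sum_a F a = F 0 + F 1.
Proof.
rewrite (bigD1 0) // (bigD1 1) //= big1 ?addr0 // => a /andP [a_neq1 a_neq0].
by case: (F2_cases a) a_neq0 a_neq1 => ->.
Qed.

Lemma F2_addrr (a : 'F_2) : a + a = 0.
Proof. exact/addrr_pchar2/pchar_Fp. Qed.

Definition setSD (I : finType) (A B : {set I}) := (A :\: B) :|: (B :\: A).

Lemma big_setSD (I : finType) (V : nmodType) (A B : {set I}) (F : I -> V) :
  (forall i, F i + F i = 0) ->
  \sum_(i in setSD A B) F i = \sum_(i in A) F i + \sum_(i in B) F i.
Proof.
move=> F_char2; rewrite (big_mkcond (mem (setSD A B))) (big_mkcond (mem A)).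
rewrite (big_mkcond (mem B)) -big_split /=; apply: eq_bigr => i _.
by rewrite !inE; case: (i \in A) (i \in B) => -[]; rewrite /= ?addr0 ?add0r.
Qed.

Lemma setUC_eqT (I : finType) (u v : {set I}) : (v :|: ~: u == setT) = (u \subset v).
Proof. by rewrite -subTset -setCS setCT setCU setCK subset0 setIC -setDE setD_eq0. Qed.

Section AlgebraicNormalForm.
Variable n : nat.
Implicit Types (S T : {set {set 'I_n}}) (u v : {set 'I_n}) (x : pt n) (g h : BF n).

Lemma bf0E : bf0 n = 0. Proof. by []. Qed.

Lemma addrr_BF h : h + h = 0.
Proof. by apply/ffunP => x; rewrite !ffunE F2_addrr. Qed.

Definition monomial u : BF n := [ffun x : pt n => \prod_(i in u) x ord0 i].
Definition pt_supp x : {set 'I_n} := [set i | x ord0 i == 1].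
Definition pt_of_set u : pt n := \row_i (i \in u)%:R.

Lemma pt_of_setK : cancel pt_of_set pt_supp.
Proof. by move=> u; apply/setP => i; rewrite inE mxE; case: (i \in u). Qed.

Lemma monomialE u x : monomial u x = (u \subset pt_supp x)%:R.
Proof.
rewrite ffunE; have [/subsetP u_sub | /subsetPn [i iu]] := boolP (u \subset _).
  by rewrite big1 // => i /u_sub; rewrite inE => /eqP.
rewrite inE (bigD1 i) //=; have [-> | -> //] := F2_cases (x ord0 i).
by rewrite mul0r.
Qed.

Lemma monomialUE u v x : monomial u x * monomial v x = monomial (u :|: v) x.
Proof.
rewrite !monomialE subUset.
by case: (u \subset _) (v \subset _) => -[]; rewrite ?mulr1 ?mulr0.
Qed.

Lemma monomialU u v : monomial u * monomial v = monomial (u :|: v).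
Proof. by apply/ffunP => x; rewrite -monomialUE ffunE. Qed.

Lemma monomial0 : monomial set0 = 1.
Proof. by apply/ffunP => x; rewrite !ffunE big_set0. Qed.

Lemma anf_evalE S : anf_eval S = \sum_(u in S) monomial u.
Proof. by apply/ffunP => x; rewrite ffunE sum_ffunE; apply: eq_bigr => u _; rewrite ffunE. Qed.

Lemma anf_eval_setSD S T : anf_eval (setSD S T) = anf_eval S + anf_eval T.
Proof. by rewrite !anf_evalE big_setSD // => u; apply: addrr_BF. Qed.

Lemma anf_eval_eq0 S : anf_eval S = 0 -> S = set0.
Proof.
(* At the point with support a minimal u in S, only the monomial u survives. *)
move=> S0; apply/eqP/set0Pn => -[u0 u0S].
have [u uS u_min] := arg_minnP (fun u => #|u|) u0S.
move/(congr1 (fun h : BF n => h (pt_of_set u))): S0.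
rewrite [RHS]ffunE anf_evalE sum_ffunE (bigD1 u) //= big1 ?addr0.
  by rewrite monomialE pt_of_setK subxx.
move=> v /andP [vS v_neq_u]; rewrite monomialE pt_of_setK.
case: (boolP (v \subset u)) => // vu.
have vu_proper : v \proper u by rewrite properEneq v_neq_u.
by have := leq_ltn_trans (u_min v vS) (proper_card vu_proper); rewrite ltnn.
Qed.

Lemma anf_eval_inj : injective (@anf_eval n).
Proof.
move=> S T ST; apply/eqP; rewrite eqEsubset -!setD_eq0 -setU_eq0; apply/eqP.
by apply: anf_eval_eq0; rewrite anf_eval_setSD ST addrr_BF.
Qed.

Lemma anf_eval_bij : bijective (@anf_eval n).
Proof.
apply: inj_card_bij anf_eval_inj _.
rewrite card_ffun card_Fp // card_mx card_Fp // mul1n.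
by rewrite -cardsT -powersetT card_powerset cardsT -cardsT -powersetT card_powerset
  cardsT card_ord.
Qed.

Definition anf h : {set {set 'I_n}} := odflt set0 [pick S | anf_eval S == h].

Lemma anfK : cancel anf (@anf_eval n).
Proof.
move=> h; rewrite /anf; case: pickP => [S /eqP // | no_anf].
have [anf_inv _ anf_invK] := anf_eval_bij.
by have := no_anf (anf_inv h); rewrite anf_invK eqxx.
Qed.

Lemma anf_evalK : cancel (@anf_eval n) anf.
Proof. by move=> S; apply: anf_eval_inj; rewrite anfK. Qed.

Lemma degE h : deg h = \max_(u in anf h) #|u|.
Proof.
rewrite /deg (big_pred1 (anf h)) // => S /=.
by apply/eqP/eqP => [<- | ->]; rewrite ?anf_evalK ?anfK.
Qed.

Lemma deg_anf_eval S : deg (anf_eval S) = \max_(u in S) #|u|.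
Proof. by rewrite degE anf_evalK. Qed.

Lemma card_le_deg h u : u \in anf h -> (#|u| <= deg h)%N.
Proof. by move=> uh; rewrite degE (leq_bigmax_cond _ uh). Qed.

Lemma deg_le_n h : (deg h <= n)%N.
Proof.
rewrite degE; apply/bigmax_leqP => u _.
by rewrite -[X in (_ <= X)%N](card_ord n) max_card.
Qed.

Lemma deg_monomial u : deg (monomial u) = #|u|.
Proof.
have -> : monomial u = anf_eval [set u] by rewrite anf_evalE big_set1.
by rewrite deg_anf_eval big_set1.
Qed.

Lemma deg0 : deg (0 : BF n) = 0%N.
Proof.
have -> : 0 = anf_eval (set0 : {set {set 'I_n}}) by rewrite anf_evalE big_set0.
by rewrite deg_anf_eval big_set0.
Qed.

Lemma deg_add g h : (deg (g + h)%R <= maxn (deg g) (deg h))%N.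
Proof.
have := anf_eval_setSD (anf g) (anf h); rewrite !anfK => <-.
rewrite deg_anf_eval; apply/bigmax_leqP => u.
by rewrite !inE => /orP [] /andP [_ /card_le_deg u_le]; rewrite leq_max u_le ?orbT.
Qed.

Lemma deg_sum (I : Type) (r : seq I) (P : pred I) (F : I -> BF n) d :
  (forall i, P i -> (deg (F i) <= d)%N) -> (deg (\sum_(i <- r | P i) F i)%R <= d)%N.
Proof.
move=> F_le; apply: (big_ind (fun h => deg h <= d)%N) => // [|g h dg dh].
  by rewrite deg0.
by apply: leq_trans (deg_add g h) _; rewrite geq_max dg dh.
Qed.

Lemma deg_mul g h : (deg (g * h)%R <= deg g + deg h)%N.
Proof.
rewrite -{1}[g]anfK -{1}[h]anfK !anf_evalE mulr_suml.
apply: deg_sum => u ug; rewrite mulr_sumr; apply: deg_sum => v vh.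
rewrite monomialU deg_monomial; apply: leq_trans (leq_card_setU u v) _.
exact: leq_add (card_le_deg ug) (card_le_deg vh).
Qed.

Lemma deg_eq0_const h : deg h = 0%N -> h = 0 \/ h = 1.
Proof.
move=> h0; have : anf h \subset [set set0].
  by apply/subsetP => u uh; rewrite inE -cards_eq0 -leqn0 -h0 card_le_deg.
rewrite subset1 => /orP [] /eqP anf_h; [right | left];
  by rewrite -[h]anfK anf_h anf_evalE ?big_set1 ?monomial0 ?big_set0.
Qed.

Lemma sum_monomial u : \sum_(x : pt n) monomial u x = (u == setT)%:R.
Proof.
have row_bij : bijective (fun f : {ffun 'I_n -> 'F_2} => \row_i f i : pt n).
  by exists (fun x : pt n => [ffun i => x ord0 i]) => [f | x];
    [apply/ffunP => i | apply/rowP => i]; rewrite !(ffunE, mxE).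
rewrite (reindex _ (onW_bij _ row_bij)) /=.
pose factor i (a : 'F_2) := if i \in u then a else 1.
rewrite (eq_bigr (fun f : {ffun 'I_n -> 'F_2} => \prod_i factor i (f i))); last first.
  by move=> f _; rewrite ffunE big_mkcond; apply: eq_bigr => i _; rewrite mxE.
rewrite -bigA_distr_bigA /= (eq_bigr (fun i => (i \in u)%:R)); last first.
  by move=> i _; rewrite sum_F2 /factor; case: (i \in u); rewrite ?add0r ?F2_addrr.
have [-> | u_neqT] := eqVneq u setT.
  by rewrite big1 // => i _; rewrite in_setT.
have /subsetPn [i _ iu] : ~~ (setT \subset u) by rewrite subTset.
by rewrite (bigD1 i) //= (negbTE iu) mul0r.
Qed.

Lemma sum_deg_lt_n h : (deg h < n)%N -> \sum_x h x = 0.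
Proof.
move=> h_lt; rewrite -[h]anfK anf_evalE.
under eq_bigr do rewrite sum_ffunE.
rewrite exchange_big big1 // => u uh; rewrite sum_monomial.
case: eqP => // uT; have := leq_ltn_trans (card_le_deg uh) h_lt.
by rewrite uT cardsT card_ord ltnn.
Qed.

Lemma sum_mul_monomial_setC h u :
  u \in anf h -> #|u| = deg h -> \sum_x h x * monomial (~: u) x = 1.
Proof.
move=> uh u_max; rewrite -[h]anfK anf_evalE.
under eq_bigr do rewrite sum_ffunE mulr_suml.
rewrite exchange_big (bigD1 u) //= [X in _ + X]big1 ?addr0.
  by under eq_bigr do rewrite monomialUE; rewrite sum_monomial setUCr eqxx.
move=> v /andP [vh v_neq_u]; under eq_bigr do rewrite monomialUE.
rewrite sum_monomial setUC_eqT; case: (boolP (u \subset v)) => // uv.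
have /eqP v_eq_u : v == u by rewrite eq_sym eqEcard uv u_max card_le_deg.
by rewrite v_eq_u eqxx in v_neq_u.
Qed.

End AlgebraicNormalForm.

Section ReedMullerDuality.
Variable n : nat.
Implicit Types (x : pt n) (h F : BF n).

Lemma mem_RM_nat h (e : nat) : (h \in RM n e%:Z) = (deg h <= e)%N.
Proof. by rewrite inE bf0E lez_nat; case: eqP => // ->; rewrite deg0. Qed.

Lemma RM_orthogonalP F (r : int) :
  (forall h, h \in RM n r -> \sum_x F x * h x = 0) <->
  F = 0 \/ ((deg F)%:Z + r < n%:Z)%R.
Proof.
split => [F_orth | [-> | F_lt] h].
- have [-> | F_neq0] := eqVneq F 0; [by left | right].
  rewrite ltNge; apply/negP => r_ge.
  have anfF_gt0 : (0 < #|anf F|)%N.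
    rewrite card_gt0; apply: contra F_neq0 => /eqP anfF0.
    by rewrite -[F]anfK anfF0 anf_evalE big_set0.
  have [u uF u_max] := eq_bigmax_cond (fun u : {set 'I_n} => #|u|) anfF_gt0.
  rewrite -degE in u_max.
  have: monomial (~: u) \in RM n r.
    rewrite inE deg_monomial cardsCs setCK card_ord; apply/orP; right.
    by move: r_ge (deg_le_n F); rewrite u_max; lia.
  move/F_orth/eqP; rewrite sum_mul_monomial_setC // oner_eq0.
- by rewrite big1 // => x _; rewrite ffunE mul0r.
- rewrite inE bf0E => /orP [/eqP -> | h_le].
    by rewrite big1 // => x _; rewrite ffunE mulr0.
  rewrite (eq_bigr (fun x => (F * h) x)); last by move=> x _; rewrite ffunE.
  by apply: sum_deg_lt_n; move: F_lt h_le (deg_mul F h); lia.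
Qed.

End ReedMullerDuality.

Section PuncturedCodes.
Variables (n : nat) (f : BF n).
Let D := supp f.
Implicit Types (x : pt n) (g h : BF n).

Lemma supp_indicator x : f x = (x \in D)%:R.
Proof. by rewrite inE; case: (F2_cases (f x)) => ->. Qed.

Lemma dotw_puncture g h :
  dotw (puncture D g) (puncture D h) = \sum_x (f * g) x * h x.
Proof.
rewrite /dotw (eq_bigr (fun y : {x | x \in D} => g (val y) * h (val y))); last first.
  by move=> y _; rewrite !ffunE.
rewrite -(big_sub D (fun x => g x * h x)) big_mkcond; apply: eq_bigr => x _.
by rewrite ffunE supp_indicator; case: (x \in D); rewrite ?mul1r ?mul0r.
Qed.

Lemma puncture_eq0 g : (puncture D g == word0 D) = (f * g == 0).
Proof.
apply/eqP/eqP => [g_D0 | fg0].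
  apply/ffunP => x; rewrite !ffunE supp_indicator.
  case: (boolP (x \in D)) => xD; rewrite ?mul0r // mul1r.
  by have := congr1 (fun w : word D => w (exist _ x xD)) g_D0; rewrite !ffunE.
apply/ffunP => y; have := congr1 (fun h => h (val y)) fg0.
by rewrite !ffunE supp_indicator (valP y) mul1r.
Qed.

Lemma puncture_dualP g (r : int) :
  puncture D g \in dual (RMp r D) <->
  (forall h, h \in RM n r -> \sum_x (f * g) x * h x = 0).
Proof.
rewrite inE; split => [/forall_inP g_orth h hr | g_orth].
  by apply/eqP; rewrite -dotw_puncture; apply/g_orth/imset_f.
by apply/forall_inP => _ /imsetP [h hr ->]; rewrite dotw_puncture g_orth.
Qed.

Lemma RMp_cap_dual_trivialP (e r : int) :
  RMp e D :&: dual (RMp r D) = [set word0 D] <->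
  (forall g, g \in RM n e -> f * g != 0 -> (n%:Z <= (deg (f * g))%:Z + r)%R).
Proof.
split => [cap0 g ge fg_neq0 | fg_deg].
  rewrite leNgt; apply/negP => fg_lt.
  have : puncture D g \in RMp e D :&: dual (RMp r D).
    by rewrite inE imset_f //=; apply/puncture_dualP/RM_orthogonalP; right.
  by rewrite cap0 inE puncture_eq0 (negbTE fg_neq0).
apply/setP => w; rewrite inE in_set1; apply/andP/eqP => [[] | ->].
  case/imsetP => g ge -> /puncture_dualP /RM_orthogonalP fg_orth.
  apply/eqP; rewrite puncture_eq0; apply: contraT => fg_neq0.
  by case: fg_orth => [/eqP | ]; [rewrite (negbTE fg_neq0) | rewrite ltNge fg_deg].
have -> : word0 D = puncture D 0 by apply/ffunP => y; rewrite !ffunE.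
split; first by rewrite imset_f // inE bf0E eqxx.
by apply/puncture_dualP => h _; rewrite big1 // => x _; rewrite mulr0 ffunE mul0r.
Qed.

End PuncturedCodes.

Lemma FAI_geP n (f : BF n) s :
  reflect ((s <= 2 * n)%N /\
           forall g, f * g != 0 -> g != 1 -> (s <= deg g + deg (f * g)%R)%N)
          (s <= FAI f)%N.
Proof.
rewrite /FAI -minEnat -leEnat.
apply: (iffP (bigmin_geP _ _ _ _)) => -[s_le s_deg]; split=> // g.
  by move=> fg_neq0 g_neq1; apply: s_deg; rewrite fg_neq0 g_neq1.
by case/andP; apply: s_deg.
Qed.

Theorem theorem2 (n s : nat) (f : BF n) :
  (0 < n)%N -> (0 < s)%N -> f != bf0 n -> (s.-1 <= deg f)%N ->
  ((s <= FAI f)%N <->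
   (forall e : nat, (1 <= e <= n)%N ->
      RMp e%:Z (supp f) :&: dual (RMp (e%:Z + n%:Z - s%:Z) (supp f))
        = [set word0 (supp f)])).
Proof.
move=> n_gt0 _ _ s_le_degf; have degf_le := deg_le_n f.
have g_neq0 g : f * g != 0 -> g != 0 by apply: contraNneq => ->; rewrite mulr0.
split => [/FAI_geP [_ FAI_s] e /andP [e_ge1 e_le] | cap_trivial].
  apply/RMp_cap_dual_trivialP => g; rewrite mem_RM_nat => g_le fg_neq0.
  have [-> | g_neq1] := eqVneq g 1; first by rewrite mulr1; lia.
  by have := FAI_s g fg_neq0 g_neq1; lia.
apply/FAI_geP; split=> [|g fg_neq0 g_neq1]; first lia.
have deg_g_range : (1 <= deg g <= n)%N.
  rewrite deg_le_n andbT lt0n; apply/eqP => /deg_eq0_const [g0 | g1].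
    by have := g_neq0 g fg_neq0; rewrite g0 eqxx.
  by rewrite g1 eqxx in g_neq1.
have /RMp_cap_dual_trivialP /(_ g) := cap_trivial _ deg_g_range.
by rewrite mem_RM_nat leqnn => /(_ isT fg_neq0); lia.
Qed.
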